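(* Let $A\in\mathbb{C}^{m\times n}$ and $b\in\mathbb{C}^m$ have computable entries. Then the pseudoinverse $A^\dagger$, the real number $\|A^\dagger\|_F$, the real number $\min_{x\in\mathbb{C}^n}\|Ax-b\|_2$, the vector $\hat x_{(A,b)}=A^\dagger b$, the real number $\|A^\dagger b\|_2$, and the real number $\|A\|_F\|A^\dagger\|_F$ all consist of computable entries (are computable).
   Context: $A^\dagger\in\mathbb{C}^{n\times m}$ is the Moore–Penrose pseudoinverse of $A$ (the unique matrix with $AA^\dagger A=A$, $A^\dagger AA^\dagger=A^\dagger$, $(AA^\dagger)^H=AA^\dagger$, $(A^\dagger A)^H=A^\dagger A$); $A^\dagger b$ is the minimal-Euclidean-norm minimizer of $\|Ax-b\|_2$. $\|\cdot\|_F$ is the Frobenius norm, $\|\cdot\|_2$ the Euclidean norm. A real number $x$ is computable if there are recursive functions $a,b,s:\mathbb{N}\to\mathbb{N}$ with $b(k)\ne0$ such that $r_k=(-1)^{s(k)}a(k)/b(k)$ satisfies $|r_k-x|\le 2^{-k}$ for all $k$; a complex number is computable if its real and imaginary parts are, and a vector/matrix is computable if all its entries are. *)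

From HB Require Import structures.
From mathcomp Require Import all_boot all_order all_algebra.
From mathcomp Require Import complex.
From mathcomp Require Import reals Rstruct.
From Stdlib Require Import Rdefinitions.
Set Implicit Arguments. Unset Strict Implicit. Unset Printing Implicit Defensive.
Import Order.TTheory GRing.Theory Num.Theory.
Inductive prcode : Type :=
  | PRzero
  | PRsucc
  | PRproj of nat
  | PRcomp of prcode & list prcode
  | PRrec of prcode & prcode
  | PRmu of prcode.

Inductive prcode_eval : prcode -> seq nat -> nat -> Prop :=
  | ev_zero xs : prcode_eval PRzero xs 0
  | ev_succ xs : prcode_eval PRsucc xs (nth 0 xs 0).+1
  | ev_proj i xs : prcode_eval (PRproj i) xs (nth 0 xs i)
  | ev_comp f gs xs ys y :
      prcode_evals gs xs ys -> prcode_eval f ys y -> prcode_eval (PRcomp f gs) xs y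
  | ev_rec0 f g xs y :
      prcode_eval f xs y -> prcode_eval (PRrec f g) (0 :: xs) y
  | ev_recS f g k xs r y :
      prcode_eval (PRrec f g) (k :: xs) r -> prcode_eval g (k :: r :: xs) y ->
      prcode_eval (PRrec f g) (k.+1 :: xs) y
  | ev_mu f xs y :
      prcode_eval f (y :: xs) 0 ->
      (forall z, (z < y)%N -> exists v, prcode_eval f (z :: xs) v.+1) ->
      prcode_eval (PRmu f) xs y
with prcode_evals : seq prcode -> seq nat -> seq nat -> Prop :=
  | evs_nil xs : prcode_evals [::] xs [::]
  | evs_cons g gs xs y ys :
      prcode_eval g xs y -> prcode_evals gs xs ys -> prcode_evals (g :: gs) xs (y :: ys).

Definition recursive_fun (f : nat -> nat) : Prop :=
  exists c : prcode, forall k : nat, prcode_eval c [:: k] (f k).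

Local Open Scope ring_scope.

Definition computable_real (x : R) : Prop :=
  exists a b s : nat -> nat,
    [/\ recursive_fun a, recursive_fun b, recursive_fun s &
      forall k : nat, (b k != 0)%N /\
        `| (-1) ^+ (s k) * (a k)%:R / (b k)%:R - x | <= 2%:R ^- k].

Notation C := (R[i]).

Definition computable_complex (z : C) : Prop :=
  computable_real (@complex.Re R z) /\ computable_real (@complex.Im R z).

Definition computable_mx (p q : nat) (M : 'M[C]_(p, q)) : Prop :=
  forall i j, computable_complex (M i j).

Definition ctrmx (p q : nat) (M : 'M[C]_(p, q)) : 'M[C]_(q, p) :=
  (map_mx (@conjc R) M)^T.

Definition sqmod (z : C) : R := (@complex.Re R z) ^+ 2 + (@complex.Im R z) ^+ 2.

Definition frob (p q : nat) (M : 'M[C]_(p, q)) : R :=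
  Num.sqrt (\sum_(i < p) \sum_(j < q) sqmod (M i j)).

Definition norm2 (p : nat) (v : 'cV[C]_p) : R :=
  Num.sqrt (\sum_(i < p) sqmod (v i 0)).

Definition is_pinv (p q : nat) (A : 'M[C]_(p, q)) (X : 'M[C]_(q, p)) : Prop :=
  [/\ A *m X *m A = A, X *m A *m X = X,
      ctrmx (A *m X) = A *m X & ctrmx (X *m A) = X *m A].

Definition is_lsq_min (p q : nat) (A : 'M[C]_(p, q)) (b : 'cV[C]_p) (r : R) : Prop :=
  (exists x : 'cV[C]_q, norm2 (A *m x - b) = r) /\
  (forall x : 'cV[C]_q, r <= norm2 (A *m x - b)).

(* Computable reals form a field closed under square roots: from approximations
   (P k - N k) / D k of x and y with recursive P, N, D, taken at a suitably
   shifted precision, the same kind of approximations of x + y, x * y, 1 / x and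
   sqrt x are built by recursive operations on numerators and denominators (the
   square root through the integer square root). Hence the computable complex
   numbers form a subfield of C closed under conjugation. The Moore-Penrose
   inverse is given by Urquhart's formula A^+ = A^(1,4) A A^(1,3), where
   A^(1,3) = (A (A^H A)^-)^H and A^(1,4) = ((A^H)^(1,3))^H are built from
   MathComp's partial inverse [pinvmx], which commutes with field morphisms; so
   A^+ has computable entries when A has. Frobenius and Euclidean norms are
   square roots of sums of squares, and the least-squares minimum is
   ||A A^+ b - b||, by Pythagoras, since A^H (A A^+ b - b) = 0. *)

From HB Require Import structures.
From mathcomp Require Import all_boot all_order all_algebra.
From mathcomp Require Import complex.
From mathcomp Require Import reals Rstruct.
From Stdlib Require Import Rdefinitions ClassicalEpsilon.
From mathcomp Require Import zify ring lra.
Set Implicit Arguments. Unset Strict Implicit. Unset Printing Implicit Defensive.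
Import Order.TTheory GRing.Theory Num.Theory.

Definition recursive (F : seq nat -> nat) : Prop :=
  exists c, forall xs, prcode_eval c xs (F xs).

Definition recursive1 (f : nat -> nat) := recursive (fun xs => f (nth 0 xs 0)).
Definition recursive2 (f : nat -> nat -> nat) :=
  recursive (fun xs => f (nth 0 xs 0) (nth 0 xs 1)).
Definition recursive3 (f : nat -> nat -> nat -> nat) :=
  recursive (fun xs => f (nth 0 xs 0) (nth 0 xs 1) (nth 0 xs 2)).

Lemma recursive_ext F G : (forall xs, F xs = G xs) -> recursive F -> recursive G.
Proof. by move=> eFG [c hc]; exists c => xs; rewrite -eFG. Qed.

Lemma recursive_succ : recursive1 succn.
Proof. by exists PRsucc => xs; constructor. Qed.

Lemma recursive_proj i : recursive (fun xs => nth 0 xs i).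
Proof. by exists (PRproj i) => xs; constructor. Qed.

Lemma recursive_comp1 f G : recursive1 f -> recursive G -> recursive (fun xs => f (G xs)).
Proof.
case=> c hc [d hd]; exists (PRcomp c [:: d]) => xs.
by apply: (ev_comp _ (hc [:: G xs])); do !constructor.
Qed.

Lemma recursive_comp2 f G H : recursive2 f -> recursive G -> recursive H ->
  recursive (fun xs => f (G xs) (H xs)).
Proof.
case=> c hc [d hd] [d' hd']; exists (PRcomp c [:: d; d']) => xs.
by apply: (ev_comp _ (hc [:: G xs; H xs])); do !constructor.
Qed.

Lemma recursive_const n : recursive (fun _ => n).
Proof.
elim: n => [|n IHn]; first by exists PRzero => xs; constructor.
exact: recursive_comp1 recursive_succ IHn.
Qed.

Fixpoint primrec (f : nat -> nat) (g : nat -> nat -> nat -> nat) (k y : nat) : nat :=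
  if k is k'.+1 then g k' (primrec f g k' y) y else f y.

Lemma recursive_primrec f g : recursive1 f -> recursive3 g -> recursive2 (primrec f g).
Proof.
case=> c hc [d hd]; exists (PRcomp (PRrec c d) [:: PRproj 0; PRproj 1]) => xs.
apply: ev_comp; first by do !constructor.
elim: (nth 0 xs 0) => [|k IHk] /=; first exact/ev_rec0/hc.
exact: ev_recS IHk (hd _).
Qed.

Lemma recursive_by_primrec (h : nat -> nat -> nat) f g :
  recursive1 f -> recursive3 g -> (forall k y, primrec f g k y = h k y) -> recursive2 h.
Proof.
by move=> hf hg eh; apply: recursive_ext (recursive_primrec hf hg) => xs; rewrite eh.
Qed.

Lemma recursive_addn : recursive2 addn.
Proof.
apply: (recursive_by_primrec (f := id) (g := fun _ r _ => r.+1)).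
- exact: recursive_proj.
- exact: recursive_comp1 recursive_succ (recursive_proj 1).
- by elim=> //= k IHk y; rewrite IHk.
Qed.

Lemma recursive_muln : recursive2 muln.
Proof.
apply: (recursive_by_primrec (f := fun=> 0) (g := fun _ r y => r + y)).
- exact: recursive_const.
- exact: recursive_comp2 recursive_addn (recursive_proj 1) (recursive_proj 2).
- by elim=> //= k IHk y; rewrite IHk mulSn addnC.
Qed.

Lemma recursive_predn : recursive1 predn.
Proof.
apply: (recursive_by_primrec (h := fun k _ => k.-1) (f := fun=> 0) (g := fun k _ _ => k)).
- exact: recursive_const.
- exact: recursive_proj.
- by case.
Qed.

Lemma recursive_subn : recursive2 subn.
Proof.
have hsubr : recursive2 (fun k y => y - k).
  apply: (recursive_by_primrec (f := id) (g := fun _ r _ => r.-1)).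
  - exact: recursive_proj.
  - exact: recursive_comp1 recursive_predn (recursive_proj 1).
  - by elim=> [|k IHk] y /=; rewrite ?subn0 ?IHk ?subnS.
exact: recursive_comp2 hsubr (recursive_proj 1) (recursive_proj 0).
Qed.

Lemma recursive_ltn : recursive2 (fun a b => nat_of_bool (a < b)).
Proof.
apply: recursive_ext (recursive_comp2 recursive_subn (recursive_const 1)
  (recursive_comp2 recursive_subn (recursive_comp1 recursive_succ (recursive_proj 0))
    (recursive_proj 1))) => xs /=.
by case: ltnP; lia.
Qed.

Lemma recursive_odd : recursive1 odd.
Proof.
apply: (recursive_by_primrec (h := fun k _ => nat_of_bool (odd k)) (f := fun=> 0)
  (g := fun _ r _ => 1 - r)).
- exact: recursive_const.
- exact: recursive_comp2 recursive_subn (recursive_const 1) (recursive_proj 1).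
- by elim=> //= k IHk y; rewrite IHk; case: odd.
Qed.

Lemma recursive_exp2 : recursive1 (expn 2).
Proof.
apply: (recursive_by_primrec (h := fun k _ => expn 2 k) (f := fun=> 1) (g := fun _ r _ => r + r)).
- exact: recursive_const.
- exact: recursive_comp2 recursive_addn (recursive_proj 1) (recursive_proj 1).
- by elim=> //= k IHk y; rewrite IHk expnS mul2n addnn.
Qed.

Fixpoint isqrt (n : nat) : nat :=
  if n is k.+1 then let r := isqrt k in r + (r.+1 * r.+1 <= n) else 0.

Lemma isqrtP n : isqrt n * isqrt n <= n < (isqrt n).+1 * (isqrt n).+1.
Proof.
elim: n => [|n /andP[lo hi]] //=; set r := isqrt n.
by have [h|h] := leqP (r.+1 * r.+1) n.+1; rewrite /= ?addn1 ?addn0; nia.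
Qed.

Lemma recursive_isqrt : recursive1 isqrt.
Proof.
apply: (recursive_by_primrec (h := fun k _ => isqrt k) (f := fun=> 0)
  (g := fun k r _ => r + (r.+1 * r.+1 <= k.+1))).
- exact: recursive_const.
- have hr1 := recursive_comp1 recursive_succ (recursive_proj 1).
  apply: recursive_comp2 recursive_addn (recursive_proj 1) _.
  exact: recursive_comp2 recursive_ltn (recursive_comp2 recursive_muln hr1 hr1)
    (recursive_comp1 recursive_succ (recursive_comp1 recursive_succ (recursive_proj 0))).
- by elim=> //= k IHk y; rewrite IHk.
Qed.

Lemma recursive_funE f : recursive_fun f <-> recursive1 f.
Proof.
split=> [[c hc]|[c hc]]; last by exists c => k; apply: (hc [:: k]).
exists (PRcomp c [:: PRproj 0]) => xs.
by apply: (ev_comp _ (hc _)); do !constructor.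
Qed.

Lemma recursive1_const n : recursive1 (fun=> n).
Proof. exact: recursive_const. Qed.

Lemma recursive1_id : recursive1 (fun k => k).
Proof. exact: recursive_proj. Qed.

Lemma recursive1_comp f g : recursive1 f -> recursive1 g -> recursive1 (fun k => f (g k)).
Proof. exact: recursive_comp1. Qed.

Lemma recursive1_succ f : recursive1 f -> recursive1 (fun k => (f k).+1).
Proof. exact: recursive_comp1 recursive_succ. Qed.

Lemma recursive1_addn f g : recursive1 f -> recursive1 g -> recursive1 (fun k => f k + g k).
Proof. exact: recursive_comp2 recursive_addn. Qed.

Lemma recursive1_subn f g : recursive1 f -> recursive1 g -> recursive1 (fun k => f k - g k).
Proof. exact: recursive_comp2 recursive_subn. Qed.

Lemma recursive1_muln f g : recursive1 f -> recursive1 g -> recursive1 (fun k => f k * g k).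
Proof. exact: recursive_comp2 recursive_muln. Qed.

Lemma recursive1_ltn f g :
  recursive1 f -> recursive1 g -> recursive1 (fun k => nat_of_bool (f k < g k)).
Proof. exact: recursive_comp2 recursive_ltn. Qed.

Lemma recursive1_odd f : recursive1 f -> recursive1 (fun k => nat_of_bool (odd (f k))).
Proof. exact: recursive_comp1 recursive_odd. Qed.

Lemma recursive1_exp2 f : recursive1 f -> recursive1 (fun k => expn 2 (f k)).
Proof. exact: recursive_comp1 recursive_exp2. Qed.

Lemma recursive1_isqrt f : recursive1 f -> recursive1 (fun k => isqrt (f k)).
Proof. exact: recursive_comp1 recursive_isqrt. Qed.

Definition posn (s a : nat) : nat := if odd s then 0 else a.
Definition negn (s a : nat) : nat := if odd s then a else 0.

Lemma recursive1_posn f g : recursive1 f -> recursive1 g -> recursive1 (fun k => posn (f k) (g k)).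
Proof.
move=> hf hg; have := recursive1_muln hg (recursive1_subn (recursive1_const 1) (recursive1_odd hf)).
by apply: recursive_ext => xs; rewrite /posn; case: odd; rewrite ?muln0 ?muln1.
Qed.

Lemma recursive1_negn f g : recursive1 f -> recursive1 g -> recursive1 (fun k => negn (f k) (g k)).
Proof.
move=> hf hg; have := recursive1_muln hg (recursive1_odd hf).
by apply: recursive_ext => xs; rewrite /negn; case: odd; rewrite ?muln0 ?muln1.
Qed.

Ltac solve_recursive :=
  repeat first [ assumption | apply: recursive1_const | apply: recursive1_id
    | apply: recursive1_succ | apply: recursive1_addn | apply: recursive1_subn
    | apply: recursive1_muln | apply: recursive1_ltn | apply: recursive1_odd
    | apply: recursive1_exp2 | apply: recursive1_isqrt | apply: recursive1_posn
    | apply: recursive1_negn ].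

Local Open Scope ring_scope.

Section RealFieldDistance.
Variable F : realFieldType.

Lemma ler_distM (r1 r2 x y B E : F) : 0 <= E <= 1 -> 1 <= B -> `|x| <= B -> `|y| <= B ->
  `|r1 - x| <= E -> `|r2 - y| <= E -> `|r1 * r2 - x * y| <= 4%:R * B * E.
Proof.
move=> /andP[E0 E1] B1 hx hy h1 h2.
have hr1 : `|r1| <= B + E by rewrite -[r1](subrK x); apply: le_trans (ler_normD _ _) _; lra.
have t1 : `|r1| * `|r2 - y| <= (B + E) * E by apply: ler_pM.
have t2 : `|r1 - x| * `|y| <= E * B by apply: ler_pM.
have -> : r1 * r2 - x * y = r1 * (r2 - y) + (r1 - x) * y.
  by rewrite mulrBr mulrBl addrA subrK.
apply: le_trans (ler_normD _ _) _; rewrite !normrM; nra.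
Qed.

Lemma ler_distV (r x E d : F) : 0 < d -> d <= `|r| -> d <= `|x| -> `|r - x| <= E ->
  `|r^-1 - x^-1| <= E / (d * d).
Proof.
move=> d0 hr hx h.
have r0 : r != 0 by rewrite -normr_gt0 (lt_le_trans d0).
have x0 : x != 0 by rewrite -normr_gt0 (lt_le_trans d0).
have -> : r^-1 - x^-1 = (x - r) * (r^-1 * x^-1) by field; rewrite r0 x0.
rewrite normrM normrM !normrV ?unitfE // distrC invfM.
have hd (z : F) : d <= `|z| -> `|z|^-1 <= d^-1.
  by move=> hz; rewrite lef_pV2 ?posrE // (lt_le_trans d0).
apply: ler_pM => //; first by rewrite mulr_ge0 ?invr_ge0 ?normr_ge0.
by apply: ler_pM; rewrite ?invr_ge0 ?normr_ge0 ?hd.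
Qed.

End RealFieldDistance.

Section RcfDistance.
Variable F : rcfType.

Lemma ler_dist_sqrt (a b : F) : 0 <= a -> 0 <= b ->
  `|Num.sqrt a - Num.sqrt b| <= Num.sqrt `|a - b|.
Proof.
move=> a0 b0; have u0 := sqrtr_ge0 a; have v0 := sqrtr_ge0 b.
rewrite -[leLHS]normr_id -[leLHS]sqrtr_sqr; apply: ler_wsqrtr.
rewrite -{2}[a]sqr_sqrtr // -{2}[b]sqr_sqrtr // subr_sqr normrM expr2.
rewrite ler_wpM2l // (ger0_norm (addr_ge0 u0 v0)) ler_norml; apply/andP; split; lra.
Qed.

Lemma ler_dist_isqrt n : `|(isqrt n)%:R - Num.sqrt (n%:R : F)| <= 1.
Proof.
have /andP[lo hi] := isqrtP n; set r := isqrt n in lo hi *.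
have sq_le (u v : nat) : leq (muln u u) v -> (u%:R : F) <= Num.sqrt v%:R.
  move=> h; rewrite -[leLHS]ger0_norm // -[leLHS]sqrtr_sqr.
  by rewrite ler_wsqrtr // expr2 -natrM ler_nat.
have hlo := sq_le _ _ lo.
have hhi : Num.sqrt (n%:R : F) < r%:R + 1.
  rewrite natr1 -[ltRHS]ger0_norm // -[ltRHS]sqrtr_sqr ltr_sqrt ?exprn_gt0 ?ltr0Sn //.
  by rewrite expr2 -natrM ltr_nat.
rewrite ler_norml; apply/andP; split; lra.
Qed.

Lemma ler_dist_isqrt_frac (n d w : nat) : (0 < d)%nat -> (0 < w)%nat ->
  `|(isqrt (n * d * (w * w)))%:R / (d * w)%:R - Num.sqrt (n%:R / d%:R : F)| <= w%:R^-1.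
Proof.
move=> d0 w0; have dw0 : (0 < (d * w)%:R :> F) by rewrite ltr0n muln_gt0 d0.
have -> : Num.sqrt (n%:R / d%:R : F) = Num.sqrt (n * d * (w * w))%:R / (d * w)%:R.
  have -> : ((n * d * (w * w))%:R : F) = n%:R / d%:R * (d * w)%:R ^+ 2.
    by rewrite !natrM; field; rewrite pnatr_eq0 -lt0n d0.
  by rewrite (sqrtrM _ (divr_ge0 (ler0n _ n) (ler0n _ d))) sqrtr_sqr ger0_norm ?ltW
    ?mulfK ?gt_eqF.
rewrite -mulrBl normrM normfV (ger0_norm (ltW dw0)).
apply: le_trans (ler_wpM2r _ (ler_dist_isqrt _)) _; first by rewrite invr_ge0 ltW.
by rewrite mul1r lef_pV2 ?posrE ?ltr0n ?muln_gt0 ?d0 // ler_nat leq_pmull.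
Qed.

End RcfDistance.

(* [eps] and [dfrac] get no result type: [: R] would parse their bodies in
   Stdlib's [R_scope]. *)
Definition eps (k : nat) := (2%:R : R) ^- k.

Lemma eps_gt0 k : 0 < eps k.
Proof. by rewrite invr_gt0 exprn_gt0 ?ltr0n. Qed.

Lemma eps_ge0 k : 0 <= eps k.
Proof. exact: ltW (eps_gt0 k). Qed.

Lemma epsD k j : eps (k + j) = eps k * eps j.
Proof. by rewrite /eps exprD invfM. Qed.

Lemma eps_half k : eps k.+1 + eps k.+1 = eps k.
Proof. rewrite -addn1 epsD /eps expr1; lra. Qed.

Lemma eps_le1 k : eps k <= 1.
Proof. by rewrite invf_le1 ?exprn_gt0 ?exprn_ege1 ?ler1n ?ltr0n. Qed.

Lemma exp2_epsD c k : 2%:R ^+ c * eps (k + c) = eps k.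
Proof. by rewrite epsD mulrCA mulfV ?mulr1 // expf_neq0 ?pnatr_eq0. Qed.

Lemma exp2_ubound (x : R) : exists c, `|x| <= 2%:R ^+ c.
Proof.
exists (Num.Def.archi_bound `|x|).
apply: le_trans (ltW (archi_boundP (normr_ge0 x))) _.
by rewrite -natrX ler_nat ltnW // ltn_expl.
Qed.

Lemma eps_lbound (x : R) : x != 0 -> exists c, eps c <= `|x|.
Proof.
move=> x0; have [c hc] := exp2_ubound x^-1; exists c.
by rewrite -[leRHS]invrK lef_pV2 ?posrE ?invr_gt0 ?normr_gt0 ?exprn_gt0 ?ltr0n // -normrV.
Qed.

Definition dfrac (P N D : nat) := (P%:R - N%:R) / (D%:R : R).

Lemma signed_fracE (a b s : nat) :
  (-1) ^+ s * a%:R / b%:R = dfrac (posn s a) (negn s a) b :> R.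
Proof.
rewrite /dfrac /posn /negn -signr_odd.
by case: odd; rewrite /= mulr0n ?subr0 ?sub0r ?expr1 ?expr0 ?mulN1r ?mul1r ?mulNr.
Qed.

Lemma dfrac_signed P N D :
  dfrac P N D = (-1) ^+ (P < N)%nat * ((P - N) + (N - P))%nat%:R / D%:R.
Proof.
rewrite /dfrac; case: ltnP => h /=.
  by rewrite (eqP (ltnW h)) add0n natrB ?(ltnW h) // expr1 mulN1r opprB.
by rewrite (eqP h) addn0 natrB // expr0 mul1r.
Qed.

Lemma computable_real_dfrac x (P N D : nat -> nat) :
  recursive1 P -> recursive1 N -> recursive1 D ->
  (forall k, (D k != 0)%nat /\ `|dfrac (P k) (N k) (D k) - x| <= eps k) ->
  computable_real x.
Proof.
move=> hP hN hD hx.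
exists (fun k => (P k - N k) + (N k - P k))%nat, D, (fun k => P k < N k)%nat.
split; rewrite ?recursive_funE //; try by solve_recursive.
by move=> k; rewrite -dfrac_signed.
Qed.

Lemma computable_real_approx x (t : nat -> nat) : recursive1 t -> computable_real x ->
  exists P N D, [/\ recursive1 P, recursive1 N, recursive1 D &
    forall k, (D k != 0)%nat /\ `|dfrac (P k) (N k) (D k) - x| <= eps (t k)].
Proof.
move=> ht [a [b [s [/recursive_funE ha /recursive_funE hb /recursive_funE hs hx]]]].
have hrec f : recursive1 f -> recursive1 (fun k => f (t k)) by move/recursive1_comp; apply.
have [hat hst] := (hrec _ ha, hrec _ hs).
exists (fun k => posn (s (t k)) (a (t k))), (fun k => negn (s (t k)) (a (t k))),
  (fun k => b (t k)).
split=> [|||k]; last by rewrite -signed_fracE; apply: hx.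
- exact: recursive1_posn hst hat.
- exact: recursive1_negn hst hat.
- exact: hrec.
Qed.

Lemma dfrac0 D : dfrac 0 0 D = 0.
Proof. by rewrite /dfrac subrr mul0r. Qed.

Lemma dfrac1 : dfrac 1 0 1 = 1.
Proof. by rewrite /dfrac subr0 divr1. Qed.

Lemma dfracN P N D : dfrac N P D = - dfrac P N D.
Proof. by rewrite /dfrac -mulNr opprB. Qed.

Lemma dfracD P1 N1 D1 P2 N2 D2 : (D1 != 0)%nat -> (D2 != 0)%nat ->
  dfrac P1 N1 D1 + dfrac P2 N2 D2 =
  dfrac (P1 * D2 + P2 * D1)%nat (N1 * D2 + N2 * D1)%nat (D1 * D2)%nat.
Proof.
move=> D1n0 D2n0; rewrite /dfrac !natrD !natrM.
by field; rewrite !pnatr_eq0 D1n0 D2n0.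
Qed.

Lemma dfracM P1 N1 D1 P2 N2 D2 :
  dfrac P1 N1 D1 * dfrac P2 N2 D2 =
  dfrac (P1 * P2 + N1 * N2)%nat (P1 * N2 + N1 * P2)%nat (D1 * D2)%nat.
Proof. by rewrite /dfrac !natrD !natrM invfM; ring. Qed.

Lemma dfracV P N D :
  (dfrac P N D)^-1 = dfrac (D * (N < P))%nat (D * (P < N))%nat ((P - N) + (N - P))%nat.
Proof.
rewrite /dfrac invf_div; case: (ltngtP P N) => [h|h|->]; rewrite /= ?muln0 ?muln1 ?mulr0n.
- by rewrite (eqP (ltnW h)) add0n natrB ?(ltnW h) // sub0r -opprB invrN mulrN mulNr.
- by rewrite (eqP (ltnW h)) addn0 natrB ?(ltnW h) // subr0.
- by rewrite !subrr invr0 mulr0 mul0r.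
Qed.

Lemma dfrac_subn P N D x : 0 <= x -> `|dfrac (P - N)%nat 0 D - x| <= `|dfrac P N D - x|.
Proof.
move=> x0; rewrite /dfrac mulr0n subr0; case: (leqP P N) => h.
  rewrite (eqP h) mul0r sub0r normrN ger0_norm // -normrN opprB.
  by rewrite ler_normr -mulNr opprB ler_wpDr ?divr_ge0 // subr_ge0 ler_nat.
by rewrite natrB ?(ltnW h).
Qed.

Lemma computable_real0 : computable_real 0.
Proof.
apply: (@computable_real_dfrac _ (fun=> 0%nat) (fun=> 0%nat) (fun=> 1%nat));
  try by solve_recursive.
by move=> k; rewrite dfrac0 subrr normr0 eps_ge0.
Qed.

Lemma computable_real1 : computable_real 1.
Proof.
apply: (@computable_real_dfrac _ (fun=> 1%nat) (fun=> 0%nat) (fun=> 1%nat));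
  try by solve_recursive.
by move=> k; rewrite dfrac1 subrr normr0 eps_ge0.
Qed.

Lemma computable_realN x : computable_real x -> computable_real (- x).
Proof.
case/(computable_real_approx recursive1_id) => P [N [D [hP hN hD hx]]].
apply: (computable_real_dfrac hN hP hD) => k; have [Dk hk] := hx k.
by rewrite dfracN -opprD normrN.
Qed.

Lemma computable_realD x y :
  computable_real x -> computable_real y -> computable_real (x + y).
Proof.
have hS := recursive1_succ recursive1_id.
case/(computable_real_approx hS) => P1 [N1 [D1 [hP1 hN1 hD1 hx]]].
case/(computable_real_approx hS) => P2 [N2 [D2 [hP2 hN2 hD2 hy]]].
apply: (@computable_real_dfrac _ (fun k => P1 k * D2 k + P2 k * D1 k)%nat
  (fun k => N1 k * D2 k + N2 k * D1 k)%nat (fun k => D1 k * D2 k)%nat); try by solve_recursive.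
move=> k; have [D1k hxk] := hx k; have [D2k hyk] := hy k.
split; first by rewrite muln_eq0 negb_or D1k D2k.
rewrite -dfracD // opprD addrACA -eps_half.
exact: le_trans (ler_normD _ _) (lerD hxk hyk).
Qed.

Lemma computable_realM x y :
  computable_real x -> computable_real y -> computable_real (x * y).
Proof.
(* With |x| + |y| <= 2^c, errors 2^-(k+c+2) in the factors give an error
   4 2^c 2^-(k+c+2) = 2^-k in the product. *)
have [c hc] := exp2_ubound (`|x| + `|y|).
rewrite ger0_norm ?addr_ge0 // in hc.
have ht : recursive1 (fun k => k + (c + 2))%nat by solve_recursive.
case/(computable_real_approx ht) => P1 [N1 [D1 [hP1 hN1 hD1 hx]]].
case/(computable_real_approx ht) => P2 [N2 [D2 [hP2 hN2 hD2 hy]]].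
apply: (@computable_real_dfrac _ (fun k => P1 k * P2 k + N1 k * N2 k)%nat
  (fun k => P1 k * N2 k + N1 k * P2 k)%nat (fun k => D1 k * D2 k)%nat); try by solve_recursive.
move=> k; have [D1k hxk] := hx k; have [D2k hyk] := hy k.
split; first by rewrite muln_eq0 negb_or D1k D2k.
have -> : eps k = 4%:R * 2%:R ^+ c * eps (k + (c + 2)).
  by rewrite -(exp2_epsD (c + 2)) exprD [_ * 2%:R ^+ 2]mulrC expr2 -natrM.
rewrite -dfracM; apply: ler_distM hxk hyk; rewrite ?eps_ge0 ?eps_le1 ?exprn_ege1 ?ler1n //.
- by apply: le_trans hc; rewrite lerDl.
- by apply: le_trans hc; rewrite lerDr.
Qed.

Lemma computable_realV x : computable_real x -> computable_real x^-1.
Proof.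
have [->|x0] := eqVneq x 0; first by rewrite invr0.
(* With 2^-c <= |x|, approximants to precision 2^-(k+2c+2) stay 2^-(c+1) away
   from 0, so inversion multiplies their error by at most 2^(2c+2). *)
have [c hc] := eps_lbound x0.
have ht : recursive1 (fun k => k + (c.+1 + c.+1))%nat by solve_recursive.
case/(computable_real_approx ht) => P [N [D [hP hN hD hx]]].
apply: (@computable_real_dfrac _ (fun k => D k * (N k < P k))%nat
  (fun k => D k * (P k < N k))%nat (fun k => (P k - N k) + (N k - P k))%nat);
  try by solve_recursive.
move=> k; have [_ hk] := hx k; set r := dfrac _ _ _ in hk.
have small : eps (k + (c.+1 + c.+1)) <= eps c.+1.
  by rewrite addnA epsD ler_piMl ?eps_ge0 ?eps_le1.
have hxr : `|x| <= `|r - x| + `|r| by rewrite distrC -{1}(subrK r x) ler_normD.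
rewrite -(eps_half c) in hc; have e0 := eps_ge0 c.+1.
have hr : eps c.+1 <= `|r| by lra.
split.
  rewrite addn_eq0 !subn_eq0 -eqn_leq; apply: contraTneq hr => PN.
  by rewrite /r PN /dfrac subrr mul0r normr0 -ltNge eps_gt0.
rewrite -dfracV; apply: le_trans (ler_distV (eps_gt0 _) hr _ hk) _; first lra.
by rewrite addnA !epsD -[eps k * _ * _]mulrA mulfK ?mulf_neq0 ?gt_eqF ?eps_gt0.
Qed.

Lemma computable_real_sqrt x : computable_real x -> computable_real (Num.sqrt x).
Proof.
have [x0|x0] := ltrP x 0; first by rewrite ler0_sqrtr ?ltW //; move=> _; exact: computable_real0.
have ht : recursive1 (fun k => k.+1 + k.+1)%nat by solve_recursive.
case/(computable_real_approx ht) => P [N [D [hP hN hD hx]]].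
(* Square roots are 1/2-Hoelder, so precision 2^-(2k+2) on x gives 2^-(k+1) on
   sqrt x; the integer square root of (P - N) D W^2, over D W, adds at most
   1/W = 2^-(k+1). *)
pose W k := expn 2 k.+1.
apply: (@computable_real_dfrac _ (fun k => isqrt ((P k - N k) * D k * (W k * W k)))%nat
  (fun=> 0%nat) (fun k => D k * W k)%nat); try by solve_recursive.
move=> k; have [Dk hk] := hx k.
have W0 : (0 < W k)%nat by rewrite expn_gt0.
split; first by rewrite muln_eq0 negb_or Dk -lt0n W0.
set q := dfrac (P k - N k)%nat 0 (D k).
have q0 : 0 <= q by rewrite /q /dfrac mulr0n subr0 divr_ge0.
have hq : `|Num.sqrt q - Num.sqrt x| <= eps k.+1.
  apply: le_trans (ler_dist_sqrt q0 x0) _.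
  rewrite -[leRHS]ger0_norm ?eps_ge0 // -[leRHS]sqrtr_sqr; apply: ler_wsqrtr.
  by rewrite expr2 -epsD; apply: le_trans (dfrac_subn _ _ _ x0) hk.
have hW : eps k.+1 = (W k)%:R^-1 by rewrite /eps /W natrX.
rewrite -(eps_half k); apply: le_trans (ler_distD (Num.sqrt q) _ _) (lerD _ hq).
by rewrite hW /q /dfrac !subr0 ler_dist_isqrt_frac // lt0n.
Qed.

Lemma computable_realB x y :
  computable_real x -> computable_real y -> computable_real (x - y).
Proof. by move=> hx /computable_realN; apply: computable_realD. Qed.

Lemma computable_real_sum (I : finType) (F : I -> R) :
  (forall i, computable_real (F i)) -> computable_real (\sum_i F i).
Proof.
by move=> hF; apply: big_ind => //; [exact: computable_real0 | exact: computable_realD].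
Qed.

Lemma computable_complex1 : computable_complex 1.
Proof. by split; [exact: computable_real1 | exact: computable_real0]. Qed.

Lemma computable_complexB x y :
  computable_complex x -> computable_complex y -> computable_complex (x - y).
Proof. by case: x y => [a b] [c d] [ha hb] [hc hd]; split; apply: computable_realB. Qed.

Lemma computable_complexM x y :
  computable_complex x -> computable_complex y -> computable_complex (x * y).
Proof.
case: x y => [a b] [c d] [ha hb] [hc hd].
by split; [apply: computable_realB | apply: computable_realD]; apply: computable_realM.
Qed.

Lemma computable_complexV x : computable_complex x -> computable_complex x^-1.
Proof.
case: x => a b [ha hb].
have hn : computable_real (a ^+ 2 + b ^+ 2)^-1.
  by apply/computable_realV/computable_realD; rewrite expr2; apply: computable_realM.
by split; [|apply: computable_realN]; apply: computable_realM.
Qed.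

Lemma computable_complex_conj x : computable_complex x -> computable_complex (conjc x).
Proof. by case: x => a b [ha hb]; split=> //; apply: computable_realN. Qed.

Lemma computable_real_sqmod z : computable_complex z -> computable_real (sqmod z).
Proof. by case=> ha hb; rewrite /sqmod !expr2; apply: computable_realD; apply: computable_realM. Qed.

(* A classical reflection into [bool], so that computability can carry the
   [divring_closed] structure of MathComp subrings. *)
Definition computableC : {pred C} :=
  fun z => if excluded_middle_informative (computable_complex z) then true else false.

Lemma computableCP z : reflect (computable_complex z) (z \in computableC).
Proof. by rewrite unfold_in /computableC; case: excluded_middle_informative; constructor. Qed.

Lemma computableC_divring_closed : divring_closed computableC.
Proof.
split; first exact/computableCP/computable_complex1.
- by move=> x y /computableCP hx /computableCP hy; apply/computableCP/computable_complexB.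
- move=> x y /computableCP hx /computableCP hy; apply/computableCP.
  exact/computable_complexM/computable_complexV.
Qed.

HB.instance Definition _ :=
  GRing.isDivringClosed.Build C computableC computableC_divring_closed.

Lemma computableC_conj z : z \in computableC -> conjc z \in computableC.
Proof. by move/computableCP/computable_complex_conj/computableCP. Qed.

Lemma computable_mxP p q (M : 'M[C]_(p, q)) :
  reflect (computable_mx M) (M \is a mxOver computableC).
Proof. by apply: (iffP mxOverP) => hM i j; apply/computableCP/hM. Qed.

Lemma computable_real_frob p q (M : 'M[C]_(p, q)) :
  M \is a mxOver computableC -> computable_real (frob M).
Proof.
move=> /mxOverP hM; apply/computable_real_sqrt/computable_real_sum => i.
by apply: computable_real_sum => j; apply/computable_real_sqmod/computableCP.
Qed.

Lemma computable_real_norm2 p (v : 'cV[C]_p) :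
  v \is a mxOver computableC -> computable_real (norm2 v).
Proof.
move=> /mxOverP hv; apply/computable_real_sqrt/computable_real_sum => i.
by apply/computable_real_sqmod/computableCP.
Qed.

Inductive compC := CompC (z : C) of z \in computableC.
Definition compC_val (u : compC) := let: CompC z _ := u in z.
HB.instance Definition _ := [isSub for compC_val].
HB.instance Definition _ := [Choice of compC by <:].
HB.instance Definition _ := [SubChoice_isSubComUnitRing of compC by <:].
HB.instance Definition _ := [SubComUnitRing_isSubIntegralDomain of compC by <:].
HB.instance Definition _ := [SubIntegralDomain_isSubField of compC by <:].

Definition conj_compC (u : compC) : compC := CompC (computableC_conj (valP u)).

Section MoorePenrose.
Variables (F : fieldType) (cj : F -> F).

Definition adjmx p q (M : 'M[F]_(p, q)) : 'M[F]_(q, p) := (map_mx cj M)^T.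

(* [ginv13 A] and [ginv14 A] satisfy Penrose's conditions (1, 3) and (1, 4). *)
Definition ginv13 p q (A : 'M[F]_(p, q)) : 'M[F]_(q, p) :=
  adjmx (A *m pinvmx (adjmx A *m A)).

Definition ginv14 p q (A : 'M[F]_(p, q)) : 'M[F]_(q, p) := adjmx (ginv13 (adjmx A)).

Definition mpinv p q (A : 'M[F]_(p, q)) : 'M[F]_(q, p) := ginv14 A *m A *m ginv13 A.

End MoorePenrose.

Lemma map_mpinv (F G : fieldType) (cjF : F -> F) (cjG : G -> G) (f : {rmorphism F -> G})
    p q (A : 'M[F]_(p, q)) :
  (forall x, f (cjF x) = cjG (f x)) -> map_mx f (mpinv cjF A) = mpinv cjG (map_mx f A).
Proof.
move=> fcj; have madj r s (M : 'M[F]_(r, s)) : map_mx f (adjmx cjF M) = adjmx cjG (map_mx f M).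
  by apply/matrixP => i j; rewrite !mxE fcj.
by rewrite /mpinv /ginv14 /ginv13 !(map_mxM, madj, map_pinvmx).
Qed.

Lemma mpinv_computable p q (A : 'M[C]_(p, q)) :
  A \is a mxOver computableC -> mpinv conjc A \is a mxOver computableC.
Proof.
move=> /mxOverP hA.
have -> : A = map_mx val (\matrix_(i, j) CompC (hA i j)) by apply/matrixP => i j; rewrite !mxE.
rewrite -(map_mpinv (cjF := conj_compC)) //; apply/mxOverP => i j; rewrite mxE; exact: valP.
Qed.

Lemma ctrmxM p q r (A : 'M[C]_(p, q)) (B : 'M[C]_(q, r)) :
  ctrmx (A *m B) = ctrmx B *m ctrmx A.
Proof. by rewrite /ctrmx map_mxM trmx_mul. Qed.

Lemma ctrmxK p q (A : 'M[C]_(p, q)) : ctrmx (ctrmx A) = A.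
Proof. by apply/matrixP => i j; rewrite !mxE conjcK. Qed.

Lemma ctrmx0 p q : ctrmx (0 : 'M[C]_(p, q)) = 0.
Proof. by apply/matrixP => i j; rewrite !mxE conjc0. Qed.

Lemma mxrank_ctrmx p q (A : 'M[C]_(p, q)) : \rank (ctrmx A) = \rank A.
Proof. by rewrite mxrank_tr mxrank_map. Qed.

Lemma ctrmx_gram p q (Z : 'M[C]_(p, q)) : ctrmx (ctrmx Z *m Z) = ctrmx Z *m Z.
Proof. by rewrite ctrmxM ctrmxK. Qed.

Lemma gram_eq0 p q (Z : 'M[C]_(p, q)) : ctrmx Z *m Z = 0 -> Z = 0.
Proof.
move=> Z0; apply/matrixP => i j; have /eqP := congr1 (fun M : 'M[C]_q => M j j) Z0.
rewrite !mxE psumr_eq0 => [/allP/(_ i (mem_index_enum i))|k _]; last first.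
  by rewrite !mxE mulrC mulcJ_ge0.
by rewrite !mxE mulrC mulf_eq0 conjc_eq0 orbb => /eqP.
Qed.

Lemma mulmx_gram_eq0l p q r (A : 'M[C]_(p, q)) (B : 'M[C]_(q, r)) :
  ctrmx A *m A *m B = 0 -> A *m B = 0.
Proof.
move=> AB0; apply: gram_eq0; rewrite ctrmxM.
have -> : ctrmx B *m ctrmx A *m (A *m B) = ctrmx B *m (ctrmx A *m A *m B).
  by rewrite !mulmxA.
by rewrite AB0 mulmx0.
Qed.

Lemma mulmx_gram_eq0r p q r (A : 'M[C]_(p, q)) (B : 'M[C]_(r, p)) :
  B *m A *m ctrmx A = 0 -> B *m A = 0.
Proof.
move=> BA0; rewrite -[B *m A]ctrmxK ctrmxM mulmx_gram_eq0l ?ctrmx0 //.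
have -> : ctrmx (ctrmx A) *m ctrmx A *m ctrmx B = ctrmx (B *m A *m ctrmx A).
  by rewrite !ctrmxM ctrmxK mulmxA.
by rewrite BA0 ctrmx0.
Qed.

Lemma submx_gram p q (A : 'M[C]_(p, q)) : (A <= ctrmx A *m A)%MS.
Proof.
(* The rows of [ctrmx A *m A] lie in the row space of [A], and the ranks agree
   because the left kernel of [ctrmx A *m A] is that of [ctrmx A]. *)
have sAA : (ctrmx A *m A <= A)%MS by apply: submxMl.
have [_ <-] := mxrank_leqif_sup sAA.
have sKK : (kermx (ctrmx A *m A) <= kermx (ctrmx A))%MS.
  by apply/sub_kermxP/mulmx_gram_eq0r; rewrite ctrmxK -mulmxA mulmx_ker.
have := mxrankS sKK; rewrite !mxrank_ker mxrank_ctrmx => hrk.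
have := mxrankS sAA; have := rank_leq_row A; have := rank_leq_col A.
by rewrite eqn_leq; lia.
Qed.

Lemma hermitian_of_gram p (Z : 'M[C]_p) : ctrmx Z = ctrmx Z *m Z -> ctrmx Z = Z.
Proof. by move=> hZ; rewrite -{2}[Z]ctrmxK hZ ctrmx_gram -hZ. Qed.

Lemma adjmx_conjc p q (M : 'M[C]_(p, q)) : adjmx conjc M = ctrmx M.
Proof. by []. Qed.

Lemma ginv13P p q (A : 'M[C]_(p, q)) : ctrmx A *m A *m ginv13 conjc A = ctrmx A.
Proof.
rewrite /ginv13 !adjmx_conjc -{1}(ctrmx_gram A) -ctrmxM.
by rewrite (mulmxKpV (submx_gram A)).
Qed.

Lemma ginv14P p q (A : 'M[C]_(p, q)) : ginv14 conjc A *m (A *m ctrmx A) = ctrmx A.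
Proof.
have := ginv13P (ctrmx A); have := ctrmx_gram (ctrmx A); rewrite !ctrmxK => hg h.
by rewrite /ginv14 adjmx_conjc -[A *m ctrmx A]hg -ctrmxM h.
Qed.

Lemma ginv13K p q (A : 'M[C]_(p, q)) : A *m ginv13 conjc A *m A = A.
Proof.
have : A *m (ginv13 conjc A *m A - 1%:M) = 0.
  by apply: mulmx_gram_eq0l; rewrite !mulmxBr !mulmx1 !mulmxA ginv13P subrr.
by rewrite mulmxBr mulmx1 mulmxA => /eqP; rewrite subr_eq0 => /eqP.
Qed.

Lemma ginv14K p q (A : 'M[C]_(p, q)) : A *m ginv14 conjc A *m A = A.
Proof.
have : (A *m ginv14 conjc A - 1%:M) *m A = 0.
  by apply: mulmx_gram_eq0r; rewrite !mulmxBl !mul1mx -!mulmxA ginv14P subrr.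
by rewrite mulmxBl mul1mx => /eqP; rewrite subr_eq0 => /eqP.
Qed.

Lemma ctrmx_mulmx_ginv13 p q (A : 'M[C]_(p, q)) :
  ctrmx (A *m ginv13 conjc A) = A *m ginv13 conjc A.
Proof. by apply: hermitian_of_gram; rewrite [LHS]ctrmxM -{1}(ginv13P A) !mulmxA ctrmxM. Qed.

Lemma ctrmx_ginv14_mulmx p q (A : 'M[C]_(p, q)) :
  ctrmx (ginv14 conjc A *m A) = ginv14 conjc A *m A.
Proof.
set W := ginv13 conjc (ctrmx A); change (ctrmx (ctrmx W *m A) = ctrmx W *m A).
by rewrite ctrmxM ctrmxK -[in RHS](ctrmxK A) -ctrmxM ctrmx_mulmx_ginv13.
Qed.

Lemma mpinvP p q (A : 'M[C]_(p, q)) : is_pinv A (mpinv conjc A).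
Proof.
rewrite /mpinv; set V := ginv14 conjc A; set W := ginv13 conjc A.
have AWA : A *m W *m A = A := ginv13K A.
have AVA : A *m V *m A = A := ginv14K A.
split.
- by rewrite !mulmxA AVA AWA.
- have -> : V *m A *m W *m A *m (V *m A *m W) = V *m (A *m W *m A) *m V *m A *m W.
    by rewrite !mulmxA.
  rewrite AWA; have -> : V *m A *m V *m A *m W = V *m (A *m V *m A) *m W.
    by rewrite !mulmxA.
  by rewrite AVA.
- by rewrite !mulmxA AVA ctrmx_mulmx_ginv13.
- have -> : V *m A *m W *m A = V *m (A *m W *m A) by rewrite !mulmxA.
  by rewrite AWA ctrmx_ginv14_mulmx.
Qed.

Lemma is_pinv_ctrmx p q (A : 'M[C]_(p, q)) X : is_pinv A X -> is_pinv (ctrmx A) (ctrmx X).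
Proof.
by case=> h1 h2 h3 h4; split; rewrite -?ctrmxM ?mulmxA ?h1 ?h2 ?h3 ?h4.
Qed.

Lemma is_pinv_sandwich p q (A : 'M[C]_(p, q)) X Y :
  is_pinv A X -> is_pinv A Y -> X = X *m A *m Y.
Proof.
(* X = X X^H A^H = X X^H A^H Y^H A^H = X (A X)^H (A Y)^H = X A X A Y. *)
case=> _ XAX AXh _ [AYA _ AYh _].
have eX : X = X *m ctrmx X *m ctrmx A by rewrite -mulmxA -ctrmxM AXh mulmxA XAX.
have eA : ctrmx A = ctrmx A *m ctrmx Y *m ctrmx A by rewrite -!ctrmxM mulmxA AYA.
rewrite {1}eX {1}eA.
have -> : X *m ctrmx X *m (ctrmx A *m ctrmx Y *m ctrmx A) =
    X *m ctrmx (A *m X) *m ctrmx (A *m Y) by rewrite !ctrmxM !mulmxA.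
by rewrite AXh AYh !mulmxA XAX.
Qed.

Lemma is_pinv_unique p q (A : 'M[C]_(p, q)) X Y : is_pinv A X -> is_pinv A Y -> X = Y.
Proof.
move=> hX hY; have eX := is_pinv_sandwich hX hY.
have := is_pinv_sandwich (is_pinv_ctrmx hY) (is_pinv_ctrmx hX).
by rewrite -!ctrmxM => /(congr1 (@ctrmx _ _)); rewrite !ctrmxK mulmxA -eX.
Qed.

Lemma sqmodD u v : sqmod (u + v) = sqmod u + sqmod v + 2%:R * complex.Re (conjc u * v).
Proof.
have expand (a b c d : R) : (a + c) ^+ 2 + (b + d) ^+ 2 =
    a ^+ 2 + b ^+ 2 + (c ^+ 2 + d ^+ 2) + 2%:R * (a * c - - b * d) by ring.
by case: u v => [a b] [c d]; apply: expand.
Qed.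

Lemma Re_sum (I : Type) (r : seq I) (F : I -> C) :
  complex.Re (\sum_(i <- r) F i) = \sum_(i <- r) complex.Re (F i).
Proof. by apply: (big_morph (fun z : C => complex.Re z)) => // -[a b] [c d]. Qed.

Lemma norm2_orthD p (u v : 'cV[C]_p) : ctrmx u *m v = 0 -> norm2 v <= norm2 (u + v).
Proof.
move=> uv0; apply: ler_wsqrtr.
have Re_uv : \sum_(i < p) complex.Re (conjc (u i 0) * v i 0) = 0.
  have := congr1 (fun M : 'M[C]_1 => complex.Re (M 0 0)) uv0; rewrite /= !mxE Re_sum => h.
  by rewrite -[RHS]/(complex.Re 0) -h; apply: eq_bigr => i _; rewrite !mxE.
under [X in _ <= X]eq_bigr do rewrite !mxE sqmodD.
rewrite !big_split /= -mulr_sumr Re_uv mulr0 addr0 lerDr.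
by rewrite addr_ge0 // sumr_ge0 // => i _; apply: sqr_ge0.
Qed.

Lemma is_lsq_min_residual p q (A : 'M[C]_(p, q)) X b r :
  is_pinv A X -> is_lsq_min A b r -> r = norm2 (A *m (X *m b) - b).
Proof.
case=> AXA _ AXh _ [[x <-] rmin]; apply/le_anti; rewrite rmin /=.
have normal : ctrmx A *m (A *m (X *m b) - b) = 0.
  by rewrite mulmxBr !mulmxA -[ctrmx A *m A *m X]mulmxA -AXh -ctrmxM AXA subrr.
have -> : A *m x - b = A *m (x - X *m b) + (A *m (X *m b) - b).
  by rewrite mulmxBr addrA subrK.
by apply: norm2_orthD; rewrite ctrmxM -mulmxA normal mulmx0.
Qed.

Theorem theorem3p7 (m n : nat) (A : 'M[R[i]]_(m, n)) (b : 'cV[R[i]]_m) :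
  computable_mx A -> computable_mx b ->
  (forall X : 'M[R[i]]_(n, m), is_pinv A X ->
     [/\ computable_mx X,
         computable_real (frob X),
         computable_mx (X *m b),
         computable_real (norm2 (X *m b)) &
         computable_real (frob A * frob X)]) /\
  (forall r : R, is_lsq_min A b r -> computable_real r).
Proof.
move=> /computable_mxP hA /computable_mxP hb.
have hX := mpinv_computable hA; have hXb := mxOverM hX hb.
split=> [X /(is_pinv_unique (mpinvP A)) <- | r /(is_lsq_min_residual (mpinvP A)) ->].
  split; [exact/computable_mxP | exact: computable_real_frob | exact/computable_mxP
    | exact: computable_real_norm2 | ].
  by apply: computable_realM; apply: computable_real_frob.
by apply: computable_real_norm2; rewrite rpredB // mxOverM.
Qed.
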